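(* Let $\mathbb{R}^n$ be endowed with the $\ell_1$ norm, let $A\in\mathbb{R}^{m\times n}$ have at least two different columns, and let $f:\mathbb{R}^m\to\mathbb{R}\cup\{\infty\}$ be a differentiable convex function with $\mathrm{conv}(A)\subseteq\mathrm{dom}(f)$ and $\frac{L_{f,A}}{\mu^\star_{f,A}}<\infty$. Consider the Frank–Wolfe algorithm with away steps (described below) with step sizes $\alpha_k=\min\left\{\alpha_{\max},-\frac{\langle\nabla f(u_k),v\rangle}{4L_{f,A}}\right\}$. If $x_0$ is a vertex of $\Delta_{n-1}$, then for all $k\ge0$ \[ f(u_k)-f^\star\le\left(1-\min\left\{\frac{\mu^\star_{f,A}}{16L_{f,A}},\frac12\right\}\right)^{k/2}(f(u_0)-f^\star). \]
   Context: $\Delta_{n-1}=\{x\in\mathbb{R}^n_+:\sum_ix_i=1\}$, $e_i$ standard basis vectors, $a_1,\dots,a_n$ the columns of $A$, $\mathrm{conv}(A)=\{Ax:x\in\Delta_{n-1}\}$; for $x\in\Delta_{n-1}$, $I(x)=\{i:x_i>0\}$. For $u\in\mathrm{conv}(A)$, $Z(u)=\{z\in\Delta_{n-1}:Az=u\}$, $\mathrm{dist}(x,Z(u))=\min_{z\in Z(u)}\|x-z\|_1$, and $L_{f,A}=\sup_{u\in\mathrm{conv}(A),\,x\in\Delta_{n-1}\setminus Z(u)}\frac{2(f(Ax)-f(u)-\langle\nabla f(u),Ax-u\rangle)}{\mathrm{dist}(x,Z(u))^2}$. $f^\star=\min_{x\in\Delta_{n-1}}f(Ax)$, $Z^\star=\{z\in\Delta_{n-1}:f(Az)=f^\star\}$,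 $\mu^\star_{f,A}=\inf_{x\in\Delta_{n-1}\setminus Z^\star}\frac{2(f(Ax)-f^\star)}{\mathrm{dist}(x,Z^\star)^2}$ with $\mathrm{dist}(x,Z^\star)=\min_{z\in Z^\star}\|x-z\|_1$. Algorithm: pick $x_0\in\Delta_{n-1}$, $u_0=Ax_0$. For $k=0,1,\dots$: let $j\in\operatorname{argmin}_{i}\langle\nabla f(u_k),a_i\rangle$, $\ell\in\operatorname{argmax}_{i\in I(x_k)}\langle\nabla f(u_k),a_i\rangle$. If $\langle\nabla f(u_k),a_j-u_k\rangle<\langle\nabla f(u_k),u_k-a_\ell\rangle$ or $|I(x_k)|=1$, set $v=a_j-u_k$, $w=e_j-x_k$, $\alpha_{\max}=1$; otherwise set $v=u_k-a_\ell$, $w=x_k-e_\ell$, $\alpha_{\max}=\frac{\langle e_\ell,x_k\rangle}{1-\langle e_\ell,x_k\rangle}$. Then $x_{k+1}=x_k+\alpha_kw$, $u_{k+1}=u_k+\alpha_kv=Ax_{k+1}$. *)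

From HB Require Import structures.
From mathcomp Require Import all_boot all_order all_algebra.
From mathcomp Require Import all_classical all_reals.
From mathcomp Require Import constructive_ereal ereal topology normedtype derive exp.
Unset Printing Implicit Defensive.
Import Order.TTheory GRing.Theory Num.Theory.
Import numFieldNormedType.Exports.
Local Open Scope classical_set_scope.
Local Open Scope ring_scope.

Section Defs.
Context {R : realType}.

Definition norm1 {n : nat} (x : 'cV[R]_n) : R := \sum_(i < n) `|x i 0|.

Definition simplex (n : nat) : set 'cV[R]_n :=
  [set x | (forall i, 0 <= x i 0) /\ \sum_(i < n) x i 0 = 1].

Definition e_ {n : nat} (i : 'I_n) : 'cV[R]_n := delta_mx i 0.

Definition convA {m n : nat} (A : 'M[R]_(m, n)) : set 'cV[R]_m :=
  [set A *m x | x in simplex n].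

Definition supp {n : nat} (x : 'cV[R]_n) : {set 'I_n} := [set i | 0 < x i 0].

Definition Zset {m n : nat} (A : 'M[R]_(m, n)) (u : 'cV[R]_m) : set 'cV[R]_n :=
  [set z | simplex n z /\ A *m z = u].

(* dist(x, Z) = min_{z in Z} ||x - z||_1 (written as an infimum; the minimum
   is attained for the closed polyhedral sets Z used below) *)
Definition dist1 {n : nat} (x : 'cV[R]_n) (Z : set 'cV[R]_n) : R :=
  inf [set norm1 (x - z) | z in Z].

(* <grad f(u), h>  is the differential of f at u applied to h *)
Definition L_fA {m n : nat} (f : 'cV[R]_m -> R) (A : 'M[R]_(m, n)) : \bar R :=
  ereal_sup [set ((2 * (f (A *m ux.2) - f ux.1 - 'd f (ux.1) (A *m ux.2 - ux.1)))
                   / (dist1 ux.2 (Zset A ux.1)) ^+ 2)%:E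
            | ux in [set ux : 'cV[R]_m * 'cV[R]_n |
                      convA A ux.1 /\ simplex n ux.2 /\ ~ Zset A ux.1 ux.2]].

Definition fstar {m n : nat} (f : 'cV[R]_m -> R) (A : 'M[R]_(m, n)) : R :=
  inf [set f (A *m x) | x in simplex n].

Definition Zstar {m n : nat} (f : 'cV[R]_m -> R) (A : 'M[R]_(m, n)) : set 'cV[R]_n :=
  [set z | simplex n z /\ f (A *m z) = fstar f A].

Definition mu_fA {m n : nat} (f : 'cV[R]_m -> R) (A : 'M[R]_(m, n)) : \bar R :=
  ereal_inf [set ((2 * (f (A *m x) - fstar f A)) / (dist1 x (Zstar f A)) ^+ 2)%:E
            | x in [set x | simplex n x /\ ~ Zstar f A x]].

(* One iteration of Frank-Wolfe with away steps, with the step size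
   alpha_k = min {alpha_max, - <grad f(u_k), v> / (4 L)}, as a relation
   between x_k and x_{k+1} (any choice of j in argmin, l in argmax allowed). *)
Definition afw_step {m n : nat} (f : 'cV[R]_m -> R) (A : 'M[R]_(m, n))
    (L : R) (xk xk1 : 'cV[R]_n) : Prop :=
  let uk := A *m xk in
  let g := 'd f uk in
  exists (j l : 'I_n),
    (forall i, g (col j A) <= g (col i A)) /\
    l \in supp xk /\ (forall i, i \in supp xk -> g (col i A) <= g (col l A)) /\
    if (g (col j A - uk) < g (uk - col l A)) || (#|supp xk| == 1)%N then
      let v := col j A - uk in
      let w := e_ j - xk in
      let amax : R := 1 in
      xk1 = xk + Num.min amax (- g v / (4 * L)) *: w
    else
      let v := uk - col l A in
      let w := xk - e_ l in
      let amax := xk l 0 / (1 - xk l 0) in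
      xk1 = xk + Num.min amax (- g v / (4 * L)) *: w.

End Defs.

From HB Require Import structures.
From mathcomp Require Import all_boot all_order all_algebra.
From mathcomp Require Import all_classical all_reals.
From mathcomp Require Import constructive_ereal ereal topology normedtype derive exp.
From mathcomp Require Import ring lra zify.
Import Order.TTheory GRing.Theory Num.Theory.
Import numFieldNormedType.Exports.
Local Open Scope classical_set_scope.
Local Open Scope ring_scope.

(* Write h for the suboptimality f(Ax) - f^* and G for the pairwise gap
   <grad f(Ax), a_l - a_j> between the away vertex l and the Frank-Wolfe
   vertex j.  By the definition of L_{f,A}, the suboptimality after moving to
   x + a w (with ||w||_1 <= 2) is at most h + a <grad, Aw> + 2 L a^2, and both
   candidate directions satisfy G <= -2 <grad, Aw>.  Convexity and the fact that x - z sums to zero give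
   2 h(x) <= G ||x - z||_1 for every minimiser z, hence 2 h <= G dist(x, Zstar)
   and, by the definition of mu^*_{f,A}, 2 mu h <= G^2.  Therefore every step
   whose length is not truncated contracts h by 1 - rho, and so does a
   truncated Frank-Wolfe step (there h <= -<grad, Aw>); a truncated away step
   does not increase h and removes a vertex from the support.  Starting from a
   vertex, the support therefore has at most 1 + (contracting steps) - (drop
   steps) elements, so at least half of the first k steps contract. *)

Section Simplex.
Context {R : realType} {m n : nat}.

Lemma mulmx_col_sum (A : 'M[R]_(m, n)) (x : 'cV[R]_n) :
  A *m x = \sum_(i < n) x i 0 *: col i A.
Proof.
apply/matrixP => r c; rewrite !mxE summxE; apply: eq_bigr => i _.
by rewrite !mxE (ord1 c) mulrC.
Qed.

Lemma linear_mulmx (A : 'M[R]_(m, n)) (g : {linear 'cV[R]_m -> R^o}) x :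
  g (A *m x) = \sum_(i < n) x i 0 * g (col i A).
Proof.
by rewrite mulmx_col_sum linear_sum; apply: eq_bigr => i _; rewrite linearZ.
Qed.

Lemma e_mxE (j i : 'I_n) : (e_ j : 'cV[R]_n) i 0 = (i == j)%:R.
Proof. by rewrite mxE eqxx andbT. Qed.

Lemma mulmx_e (A : 'M[R]_(m, n)) (i : 'I_n) : A *m e_ i = col i A.
Proof. by rewrite -colE. Qed.

Lemma simplex_e (j : 'I_n) : simplex n (e_ j : 'cV[R]_n).
Proof.
split=> [i|]; first by rewrite e_mxE ler0n.
rewrite (bigD1 j) //= e_mxE eqxx big1 ?addr0 // => i /negbTE ij.
by rewrite e_mxE ij.
Qed.

Lemma supp_e (j : 'I_n) : supp (e_ j : 'cV[R]_n) = [set j]%SET.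
Proof. by apply/setP => i; rewrite !inE e_mxE; case: (i == j); rewrite ?ltr01 ?ltxx. Qed.

Lemma simplex_supp_gt0 {x : 'cV[R]_n} : simplex n x -> (0 < #|supp x|)%N.
Proof.
case=> x0 sx; apply/card_gt0P.
have : \sum_(i < n) x i 0 <> 0 by rewrite sx; exact/eqP/oner_neq0.
case/(psumr_neq0P (fun i _ => x0 i)) => i /andP[_ xi].
by exists i; rewrite inE.
Qed.

Lemma simplex_supp1 {x : 'cV[R]_n} {l} :
  simplex n x -> l \in supp x -> #|supp x| = 1%N -> x = e_ l.
Proof.
move=> [x0 sx] xl /eqP/cards1P[k suppx].
have {k suppx}suppx : supp x = [set l]%SET by move: xl; rewrite suppx inE => /eqP <-.
have xi0 i : i != l -> x i 0 = 0.
  move=> il; apply/le_anti; rewrite x0 andbT leNgt.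
  apply: contra il => xi.
  have : i \in supp x by rewrite inE.
  by rewrite suppx inE.
have xl1 : x l 0 = 1 by rewrite -sx (bigD1 l) //= big1 ?addr0.
apply/matrixP => i c; rewrite (ord1 c) e_mxE.
by have [->|il] := eqVneq i l; [rewrite xl1 | rewrite xi0].
Qed.

Lemma simplex_supp_lt1 {x : 'cV[R]_n} {l} :
  simplex n x -> l \in supp x -> #|supp x| != 1%N -> x l 0 < 1.
Proof.
move=> [x0 sx] xl supp_neq1.
have : (0 < #|supp x :\ l|)%N by move: supp_neq1; rewrite (cardsD1 l) xl; case: #|_|.
case/card_gt0P => i; rewrite !inE => /andP[il xi].
rewrite -sx (bigD1 l) //= (bigD1 i) //=.
have : 0 <= \sum_(k < n | (k != l) && (k != i)) x k 0 by apply: sumr_ge0.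
lra.
Qed.

Lemma sum_add_scale_sub (x y z : 'cV[R]_n) a :
  \sum_(i < n) (x + a *: (y - z)) i 0 =
  \sum_(i < n) x i 0 + a * (\sum_(i < n) y i 0 - \sum_(i < n) z i 0).
Proof.
rewrite -sumrB mulr_sumr -big_split /=; apply: eq_bigr => i _.
by rewrite !mxE.
Qed.

Lemma simplex_fw_update (x : 'cV[R]_n) j a :
  simplex n x -> 0 <= a <= 1 -> simplex n (x + a *: (e_ j - x)).
Proof.
move=> [x0 sx] /andP[a0 a1]; split=> [i|].
  rewrite !mxE eqxx andbT; have := x0 i.
  by case: (i == j) => /=; nra.
case: (simplex_e j) => _ se.
by rewrite sum_add_scale_sub sx se subrr mulr0 addr0.
Qed.

Lemma supp_fw_update (x : 'cV[R]_n) j a :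
  simplex n x -> supp (x + a *: (e_ j - x)) \subset (j |: supp x)%SET.
Proof.
move=> [x0 _]; apply/fintype.subsetP => i; rewrite !inE !mxE eqxx andbT.
have [//|_ /=] := eqVneq i j; rewrite sub0r => xi.
rewrite lt_neqAle x0 andbT eq_sym; apply: contraTneq xi => ->.
by rewrite oppr0 mulr0 addr0 ltxx.
Qed.

Lemma simplex_away_update (x : 'cV[R]_n) l a :
  simplex n x -> x l 0 < 1 -> 0 <= a <= x l 0 / (1 - x l 0) ->
  simplex n (x + a *: (x - e_ l)).
Proof.
move=> [x0 sx] xl1 /andP[a0]; rewrite ler_pdivlMr ?subr_gt0 // => axl.
split=> [i|].
  rewrite !mxE eqxx andbT; have := x0 i.
  by have [->|_] := eqVneq i l => /=; nra.
case: (simplex_e l) => _ se.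
by rewrite sum_add_scale_sub sx se subrr mulr0 addr0.
Qed.

Lemma supp_away_update (x : 'cV[R]_n) l a :
  simplex n x -> 0 <= a -> supp (x + a *: (x - e_ l)) \subset supp x.
Proof.
move=> [x0 _] a0; apply/fintype.subsetP => i; rewrite !inE !mxE eqxx andbT.
by have := x0 i; case: (i == l) => /=; nra.
Qed.

Lemma supp_away_drop {x : 'cV[R]_n} {l} :
  simplex n x -> l \in supp x -> x l 0 < 1 ->
  (#|supp (x + (x l 0 / (1 - x l 0))%R *: (x - e_ l))| < #|supp x|)%N.
Proof.
move=> sx xl xl1; set a := x l 0 / (1 - x l 0).
have xl0 : 0 < x l 0 by rewrite inE in xl.
have a0 : 0 <= a by rewrite divr_ge0 ?subr_ge0 ?ltW.
have drop : supp (x + a *: (x - e_ l)) \subset (supp x :\ l)%SET.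
  apply/fintype.subsetP => i xi.
  rewrite in_setD1 (fintype.subsetP (supp_away_update _ l _ sx a0) i xi) andbT.
  apply: contraTneq xi => ->; rewrite inE !mxE !eqxx mulr1n.
  have -> : x l 0 + a * (x l 0 - 1) = 0.
    by rewrite /a; field; rewrite subr_eq0 eq_sym lt_eqF.
  by rewrite ltxx.
by apply: leq_ltn_trans (subset_leq_card drop) _; rewrite [X in (_ < X)%N](cardsD1 l) xl.
Qed.

Lemma norm1_ge0 (x : 'cV[R]_n) : 0 <= norm1 x.
Proof. exact: sumr_ge0. Qed.

Lemma norm1Z a (x : 'cV[R]_n) : norm1 (a *: x) = `|a| * norm1 x.
Proof. by rewrite /norm1 mulr_sumr; apply: eq_bigr => i _; rewrite mxE normrM. Qed.

Lemma norm1_simplexB {x y : 'cV[R]_n} :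
  simplex n x -> simplex n y -> norm1 (x - y) <= 2.
Proof.
move=> [x0 sx] [y0 sy].
have -> : 2 = \sum_(i < n) (x i 0 + y i 0) by rewrite big_split /= sx sy.
apply: ler_sum => i _; rewrite !mxE.
by apply: le_trans (ler_normB _ _) _; rewrite !ger0_norm.
Qed.

Lemma dist1_le (x z : 'cV[R]_n) Z : Z z -> dist1 x Z <= norm1 (x - z).
Proof.
move=> Zz; apply: ge_inf; last by exists z.
by exists 0 => _ [y _ <-]; exact: norm1_ge0.
Qed.

Lemma dist1_ge (x : 'cV[R]_n) Z c :
  Z !=set0 -> (forall z, Z z -> c <= norm1 (x - z)) -> c <= dist1 x Z.
Proof.
move=> [z Zz] lb; apply: lb_le_inf; first by exists (norm1 (x - z)), z.
by move=> _ [y Zy <-]; exact: lb.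
Qed.

Lemma dist1_ge0 (x : 'cV[R]_n) Z : 0 <= dist1 x Z.
Proof.
have [->|/set0P Zne] := eqVneq Z set0; first by rewrite /dist1 image_set0 inf0.
by apply: dist1_ge => // z _; exact: norm1_ge0.
Qed.

Lemma dist1_Zset_gt0 (A : 'M[R]_(m, n)) u (x : 'cV[R]_n) :
  Zset A u !=set0 -> A *m x != u -> 0 < dist1 x (Zset A u).
Proof.
move=> Zne Axu.
have [r Axur] : exists r, (A *m x) r 0 != u r 0.
  apply/existsP; apply: contraNT Axu => /existsPn Axu.
  by apply/eqP/matrixP => r c; rewrite (ord1 c); exact/eqP/negPn/Axu.
set K := 1 + \sum_(i < n) `|A r i|.
have K0 : 0 < K by rewrite ltr_pwDl // sumr_ge0.
have AK i : `|A r i| <= K.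
  by rewrite ler_wpDl // (bigD1 i) //= lerDl sumr_ge0.
have e0 : 0 < `|(A *m x) r 0 - u r 0| by rewrite normr_gt0 subr_eq0.
apply: (@lt_le_trans _ _ (`|(A *m x) r 0 - u r 0| / K)); first exact: divr_gt0.
apply: dist1_ge => // z [_ <-]; rewrite ler_pdivrMr // mulrC.
have -> : (A *m x) r 0 - (A *m z) r 0 = (A *m (x - z)) r 0 by rewrite mulmxBr !mxE.
rewrite mxE /norm1 mulr_sumr; apply: le_trans (ler_norm_sum _ _ _) _.
by apply: ler_sum => i _; rewrite normrM ler_wpM2r.
Qed.

End Simplex.

Lemma convex_diff_le {R : realType} {V : normedModType R} {f : V -> R}
    {S : set V} {u y : V} :
  (forall u v (t : R), S u -> S v -> 0 <= t <= 1 ->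
     f ((1 - t) *: u + t *: v) <= (1 - t) * f u + t * f v) ->
  differentiable f u -> S u -> S y -> 'd f u (y - u) <= f y - f u.
Proof.
move=> cvx df Su Sy; rewrite -deriveE //.
have D := @diff_derivable _ _ _ f u (y - u) df.
rewrite /derive (cvg_at_rightE _ _ D).
apply: limr_le; first exact: cvgP (cvg_dnbhs_at_right D).
near=> t.
have t0 : 0 < t by near: t; exact: nbhs_right_gt.
have t1 : t <= 1 by near: t; exact: nbhs_right_le.
rewrite /= /shift.
have -> : t *: (y - u) + u = (1 - t) *: u + t *: y.
  by rewrite scalerBr scalerBl scale1r addrC addrA addrAC.
have := cvx u y t Su Sy; rewrite (ltW t0) t1 => /(_ isT) cvx_t.
rewrite -[_ *: _]/(t^-1 * _) ler_pdivrMl // mulrBr.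
lra.
Unshelve. all: by end_near.
Qed.

Section StepInequalities.
Context {R : realFieldType}.

Lemma short_step_contraction {L M G g h h' : R} :
  0 <= L -> 0 < M -> 0 <= G -> G <= - (2 * g) -> 0 <= h -> 2 * M * h <= G ^+ 2 ->
  h' <= h + (- g / (4 * L)) * g + 2 * L * (- g / (4 * L)) ^+ 2 ->
  h' <= (1 - M / (16 * L)) * h.
Proof.
move=> L0 M0 G0 Gg h0 hG.
have [->|L_neq0] := eqVneq L 0; first by rewrite !(mulr0, invr0, mul0r, addr0, subr0, mul1r).
rewrite -addrA.
have -> : - g / (4 * L) * g + 2 * L * (- g / (4 * L)) ^+ 2 = - ((2 * g ^+ 2) / (16 * L)).
  by field.
have -> : (1 - M / (16 * L)) * h = h - (M * h) / (16 * L) by field.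
move/le_trans; apply; rewrite lerD2l lerN2 ler_wpM2r ?invr_ge0 //; nra.
Qed.

Lemma long_step_halving {L g h h' : R} :
  0 <= L -> 1 < - g / (4 * L) -> 0 <= h -> h <= - g -> h' <= h + g + 2 * L ->
  h' <= h / 2.
Proof.
move=> L0 q1 h0 hg.
have [L_eq0|L_neq0] := eqVneq L 0; first by move: q1; rewrite L_eq0 mulr0 invr0 mulr0 ltr10.
by move: q1; rewrite ltr_pdivlMr; lra.
Qed.

Lemma damped_step_descent {L a g h h' : R} :
  0 <= L -> 0 <= - g -> 0 <= a <= - g / (4 * L) -> h' <= h + a * g + 2 * L * a ^+ 2 ->
  h' <= h.
Proof.
move=> L0 g0 /andP[a0 aq] /le_trans; apply.
have [L_eq0|L_neq0] := eqVneq L 0; first by rewrite L_eq0 mulr0 mul0r addr0; nra.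
by move: aq; rewrite ler_pdivlMr; nra.
Qed.

Lemma growth_gap_sqr {M G h d : R} :
  0 < M -> 0 <= G -> 0 < d -> M * d ^+ 2 <= 2 * h -> 2 * h <= G * d ->
  2 * M * h <= G ^+ 2.
Proof.
move=> M0 G0 d0 Mdh hGd.
have MdG : M * d <= G by rewrite -(ler_pM2r d0) -mulrA -expr2; lra.
have : M * (2 * h) <= M * (G * d) by rewrite ler_pM2l.
have : M * (G * d) <= G ^+ 2 by rewrite mulrCA expr2 ler_wpM2l.
lra.
Qed.

End StepInequalities.

Lemma exprn_le_powR_half {R : realType} (r : R) (c k : nat) :
  0 < r <= 1 -> (k <= 2 * c)%N -> r ^+ c <= r `^ (k%:R / 2).
Proof.
move=> /andP[r0 r1] kc; rewrite -powR_mulrn ?(ltW r0) //.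
apply: ger_powR; first by rewrite r0 r1.
by rewrite ler_pdivrMr // mulrC -natrM ler_nat.
Qed.

Section AwayStepFrankWolfe.
Context {R : realType} {m n : nat} {A : 'M[R]_(m, n)} {f : 'cV[R]_m -> R}.
Hypothesis A_cols_neq : exists i j : 'I_n, col i A != col j A.
Hypothesis f_differentiable : forall u, convA A u -> differentiable f u.
Hypothesis f_convex : forall u v (t : R), convA A u -> convA A v -> 0 <= t <= 1 ->
  f ((1 - t) *: u + t *: v) <= (1 - t) * f u + t * f v.
Hypothesis L_fA_lt_pinfty : (L_fA f A < +oo)%E.
Hypothesis mu_fA_gt0 : (0 < mu_fA f A)%E.

Implicit Types (x y z w : 'cV[R]_n) (i j l : 'I_n).

Let Lf := fine (L_fA f A).

Definition fw_vertex x j :=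
  forall i, 'd f (A *m x) (col j A) <= 'd f (A *m x) (col i A).

Definition away_vertex x l := l \in supp x /\
  forall i, i \in supp x -> 'd f (A *m x) (col i A) <= 'd f (A *m x) (col l A).

Lemma convA_mulmx x : simplex n x -> convA A (A *m x).
Proof. by exists x. Qed.

Lemma convex_diff_mulmx_le {x y} : simplex n x -> simplex n y ->
  'd f (A *m x) (A *m y - A *m x) <= f (A *m y) - f (A *m x).
Proof.
move=> /convA_mulmx cx /convA_mulmx cy.
exact: (convex_diff_le f_convex (f_differentiable _ cx) cx cy).
Qed.

Lemma L_fA_ge0 : (0 <= L_fA f A)%E.
Proof.
have [i [j ij]] := A_cols_neq.
set u := col i A.
apply: le_trans (ereal_sup_ubound _); last first.
  exists (u, e_ j) => //=; split; [|split].
  - by rewrite /u -mulmx_e; apply: convA_mulmx; exact: simplex_e.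
  - exact: simplex_e.
  - by case=> _; rewrite mulmx_e => /eqP; rewrite eq_sym (negbTE ij).
rewrite lee_fin divr_ge0 ?sqr_ge0 // mulr_ge0 // subr_ge0.
by rewrite /u -!mulmx_e; apply: convex_diff_mulmx_le; exact: simplex_e.
Qed.

Lemma L_fA_fin : L_fA f A = Lf%:E.
Proof. by rewrite /Lf fineK // ge0_fin_numE ?L_fA_ge0. Qed.

Lemma Lf_ge0 : 0 <= Lf.
Proof. by rewrite /Lf fine_ge0 ?L_fA_ge0. Qed.

Lemma L_fA_smooth {x x'} : simplex n x -> simplex n x' ->
  f (A *m x') - f (A *m x) - 'd f (A *m x) (A *m x' - A *m x) <=
    Lf / 2 * norm1 (x' - x) ^+ 2.
Proof.
move=> sx sx'; set u := A *m x.
have [->|Ax'u] := eqVneq (A *m x') u.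
  by rewrite !subrr linear0 subrr mulr_ge0 ?sqr_ge0 ?divr_ge0 ?Lf_ge0.
set d := dist1 x' (Zset A u).
have d_gt0 : 0 < d by apply: dist1_Zset_gt0 => //; exists x.
have d_le : d <= norm1 (x' - x) by apply: dist1_le.
have : (((2 * (f (A *m x') - f u - 'd f u (A *m x' - u))) / d ^+ 2)%:E <= L_fA f A)%E.
  apply: ereal_sup_ubound; exists (u, x') => //=; split; first exact: convA_mulmx.
  by split => // -[_ /eqP]; rewrite (negbTE Ax'u).
rewrite L_fA_fin lee_fin ler_pdivrMr ?exprn_gt0 // => bound.
have : d ^+ 2 <= norm1 (x' - x) ^+ 2 by nra.
move/(ler_wpM2l Lf_ge0); lra.
Qed.

Lemma fw_vertex_exists x : exists j, fw_vertex x j.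
Proof.
have [i0 _] := A_cols_neq.
exists [arg min_(i < i0) 'd f (A *m x) (col i A)]%O.
by case: arg_minP => // j _ jmin i; exact: jmin.
Qed.

Lemma fw_gap_lower_bound x j y : simplex n x -> fw_vertex x j -> simplex n y ->
  f (A *m x) - ('d f (A *m x) (A *m x) - 'd f (A *m x) (col j A)) <= f (A *m y).
Proof.
move=> sx jmin sy; have := convex_diff_mulmx_le sx sy; rewrite linearB /=.
have : 'd f (A *m x) (col j A) <= 'd f (A *m x) (A *m y).
  case: sy => y0 sy; rewrite linear_mulmx -[X in X <= _]mul1r -sy mulr_suml.
  by apply: ler_sum => i _; rewrite ler_wpM2l.
lra.
Qed.

Lemma f_simplex_lbound : has_lbound [set f (A *m y) | y in simplex n].
Proof.
have [i _] := A_cols_neq; have [j jmin] := fw_vertex_exists (e_ i).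
by eexists => _ [y sy <-]; apply: fw_gap_lower_bound jmin sy; exact: simplex_e.
Qed.

Lemma fstar_le y : simplex n y -> fstar f A <= f (A *m y).
Proof. by move=> sy; apply: ge_inf; [exact: f_simplex_lbound | exists y]. Qed.

Lemma subopt_le_fw_gap x j : simplex n x -> fw_vertex x j ->
  f (A *m x) - fstar f A <= 'd f (A *m x) (A *m x) - 'd f (A *m x) (col j A).
Proof.
move=> sx jmin; rewrite lerBlDl addrC -lerBlDl.
apply: lb_le_inf; first by exists (f (A *m x)), x.
by move=> _ [y sy <-]; exact: fw_gap_lower_bound.
Qed.

Definition pairwise_gap x j l : R := 'd f (A *m x) (col l A) - 'd f (A *m x) (col j A).

Lemma pairwise_gap_ge0 {x j} l : fw_vertex x j -> 0 <= pairwise_gap x j l.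
Proof. by move=> jmin; rewrite subr_ge0. Qed.

Lemma diff_mulmxB_le_pairwise_gap {x z j l} :
  simplex n x -> simplex n z -> fw_vertex x j -> away_vertex x l ->
  'd f (A *m x) (A *m (x - z)) <= pairwise_gap x j l / 2 * norm1 (x - z).
Proof.
move=> [x0 sx] [z0 sz] jmin [_ lmax].
set c := fun i => 'd f (A *m x) (col i A).
have sum_xz : \sum_(i < n) (x - z) i 0 = 0.
  by under eq_bigr do rewrite !mxE; rewrite sumrB sx sz subrr.
rewrite linear_mulmx -/c.
have -> : \sum_(i < n) (x - z) i 0 * c i = \sum_(i < n) (x - z) i 0 * (c i - c j).
  under [RHS]eq_bigr do rewrite mulrBr.
  by rewrite sumrB -mulr_suml sum_xz mul0r subr0.
(* [x - z] sums to zero, so [norm1 (x - z) / 2] is the mass of its positive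
   part, which lives on [supp x] where [c] is at most [c l]. *)
have -> : pairwise_gap x j l / 2 * norm1 (x - z) =
    \sum_(i < n) (c l - c j) / 2 * (`|(x - z) i 0| + (x - z) i 0).
  by rewrite -mulr_sumr big_split /= sum_xz addr0.
apply: ler_sum => i _; have cji : c j <= c i := jmin i.
have [xz_gt0|xz_le0] := ltP 0 ((x - z) i 0); last by rewrite (ler0_norm xz_le0); nra.
have cil : c i <= c l.
  by apply: lmax; move: xz_gt0; rewrite !mxE inE; have := z0 i; lra.
by rewrite (gtr0_norm xz_gt0); nra.
Qed.

Let Mf := fine (mu_fA f A).

Lemma mu_fA_pinfty_opt y : mu_fA f A = +oo%E -> simplex n y -> f (A *m y) = fstar f A.
Proof.
move=> /ereal_inf_pinfty mu_oo sy.
have [[_ //]|yZ] := pselect (Zstar f A y).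
by have := mu_oo _ (ex_intro2 _ _ y (conj sy yZ) erefl).
Qed.

Lemma mu_fA_fin : mu_fA f A != +oo%E -> mu_fA f A = Mf%:E.
Proof. by move=> mu_fin; rewrite /Mf fineK // ge0_fin_numE ?ltey // ltW. Qed.

Lemma Mf_gt0 : mu_fA f A != +oo%E -> 0 < Mf.
Proof. by move=> mu_fin; rewrite /Mf fine_gt0 // mu_fA_gt0 ltey. Qed.

Lemma subopt_le_pairwise_gap_sqr {x j l} :
  mu_fA f A != +oo%E -> simplex n x -> fw_vertex x j -> away_vertex x l ->
  2 * Mf * (f (A *m x) - fstar f A) <= pairwise_gap x j l ^+ 2.
Proof.
move=> mu_fin sx jmin lmax.
set h := f (A *m x) - fstar f A; set G := pairwise_gap x j l.
have G0 : 0 <= G := pairwise_gap_ge0 l jmin.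
have [[_ fx]|xZ] := pselect (Zstar f A x); first by rewrite /h fx subrr mulr0 sqr_ge0.
set d := dist1 x (Zstar f A).
have Mf_le : Mf <= 2 * h / d ^+ 2.
  by rewrite -lee_fin -mu_fA_fin //; apply: ereal_inf_lbound; exists x.
have d_neq0 : d != 0.
  by apply: contraTneq Mf_le => ->; rewrite expr0n /= invr0 mulr0 -ltNge Mf_gt0.
have Zne : Zstar f A !=set0.
  apply/set0P; apply: contra d_neq0 => /eqP Z0.
  by rewrite /d /dist1 Z0 image_set0 inf0.
have hz z : Zstar f A z -> 2 * h <= G * norm1 (x - z).
  case=> sz fz; have cvx := convex_diff_mulmx_le sx sz.
  have gap := diff_mulmxB_le_pairwise_gap sx sz jmin lmax.
  rewrite mulmxBr linearB /= in gap; rewrite linearB /= in cvx.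
  by rewrite /h /G -fz; lra.
have d_gt0 : 0 < d by rewrite lt_neqAle eq_sym d_neq0 dist1_ge0.
have hGd : 2 * h <= G * d.
  have [G_eq0|G_neq0] := eqVneq G 0.
    by have [z /hz] := Zne; rewrite G_eq0 !mul0r.
  have G_gt0 : 0 < G by rewrite lt_neqAle eq_sym G_neq0.
  rewrite -ler_pdivrMl //; apply: dist1_ge => // z /hz.
  by rewrite ler_pdivrMl.
have Mdh : Mf * d ^+ 2 <= 2 * h by rewrite -ler_pdivlMr ?exprn_gt0.
exact: growth_gap_sqr (Mf_gt0 mu_fin) G0 d_gt0 Mdh hGd.
Qed.

Definition rho : R := if mu_fA f A == +oo%E then 2^-1
  else Num.min (fine (mu_fA f A) / (16 * fine (L_fA f A))) 2^-1.

Lemma rho_ge0 : 0 <= rho.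
Proof.
rewrite /rho; case: ifPn => [_|mu_fin]; first by rewrite invr_ge0.
by rewrite le_min invr_ge0 ler0n andbT divr_ge0 ?mulr_ge0 ?Lf_ge0 // ltW ?Mf_gt0.
Qed.

Lemma rho_le_half : rho <= 2^-1.
Proof. by rewrite /rho; case: ifP => // _; rewrite ge_min lexx orbT. Qed.

Lemma rho_le_Mf : mu_fA f A != +oo%E -> rho <= Mf / (16 * Lf).
Proof. by move=> mu_fin; rewrite /rho (negbTE mu_fin) ge_min lexx. Qed.

Section Update.
Context {x w : 'cV[R]_n} {j l : 'I_n} {amax a : R}.
Hypotheses (sx : simplex n x) (jmin : fw_vertex x j) (lmax : away_vertex x l).
Hypotheses (amax_ge0 : 0 <= amax) (w_le2 : norm1 w <= 2).
Let slope : R := 'd f (A *m x) (A *m w).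
Hypothesis gap_le : pairwise_gap x j l <= - (2 * slope).
Hypothesis a_def : a = Num.min amax (- slope / (4 * Lf)).
Hypothesis sx' : simplex n (x + a *: w).

Let h := f (A *m x) - fstar f A.
Let h' := f (A *m (x + a *: w)) - fstar f A.

Lemma update_slope_le0 : slope <= 0.
Proof. by have := pairwise_gap_ge0 l jmin; move: gap_le; lra. Qed.

Lemma update_step_ge0 : 0 <= a.
Proof.
by rewrite a_def le_min amax_ge0 divr_ge0 ?oppr_ge0 ?update_slope_le0 ?mulr_ge0 ?Lf_ge0.
Qed.

Lemma update_subopt_le : h' <= h + a * slope + 2 * Lf * a ^+ 2.
Proof.
have smooth := L_fA_smooth sx sx'.
have Aupd : A *m (x + a *: w) - A *m x = a *: (A *m w).
  by rewrite mulmxDr -scalemxAr addrC addKr.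
have upd : x + a *: w - x = a *: w by rewrite addrC addKr.
have dZ : 'd f (A *m x) (a *: (A *m w)) = a * slope by rewrite linearZ.
rewrite Aupd upd dZ norm1Z ger0_norm ?update_step_ge0 // in smooth.
have : (a * norm1 w) ^+ 2 <= 4 * a ^+ 2.
  rewrite exprMn mulrC ler_wpM2r ?sqr_ge0 //.
  by have := norm1_ge0 w; move: w_le2; nra.
move/(ler_wpM2l (divr_ge0 Lf_ge0 (ler0n _ 2))).
by move: smooth; rewrite /h' /h; lra.
Qed.

Lemma update_descent : h' <= h.
Proof.
apply: damped_step_descent Lf_ge0 _ _ update_subopt_le.
  by rewrite oppr_ge0 update_slope_le0.
by rewrite update_step_ge0 a_def ge_min lexx orbT.
Qed.

Lemma update_short_contraction :
  - slope / (4 * Lf) <= amax -> h' <= (1 - rho) * h.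
Proof.
move=> q_le; have h'_le := update_subopt_le; rewrite a_def (min_r q_le) in h'_le.
have [mu_oo|mu_fin] := eqVneq (mu_fA f A) +oo%E.
  by rewrite /h' /h !mu_fA_pinfty_opt // subrr mulr0.
have h0 : 0 <= h by rewrite subr_ge0 fstar_le.
have Mh := subopt_le_pairwise_gap_sqr mu_fin sx jmin lmax.
have contr := short_step_contraction Lf_ge0 (Mf_gt0 mu_fin) (pairwise_gap_ge0 l jmin)
  gap_le h0 Mh h'_le.
apply: le_trans contr _.
by rewrite ler_wpM2r // lerB // rho_le_Mf.
Qed.

Lemma update_long_contraction : h <= - slope -> amax = 1 -> h' <= (1 - rho) * h.
Proof.
move=> h_le amax1; have [q_le|q_gt] := leP (- slope / (4 * Lf)) 1.
  by apply: update_short_contraction; rewrite amax1.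
have h'_le := update_subopt_le.
rewrite a_def amax1 (min_l (ltW q_gt)) mul1r expr1n mulr1 in h'_le.
have h0 : 0 <= h by rewrite subr_ge0 fstar_le.
have := long_step_halving Lf_ge0 q_gt h0 h_le h'_le.
by have := rho_le_half; nra.
Qed.

End Update.

Lemma fw_step_progress {x j l} :
  simplex n x -> fw_vertex x j -> away_vertex x l ->
  ('d f (A *m x) (col j A - A *m x) < 'd f (A *m x) (A *m x - col l A))
    || (#|supp x| == 1%N) ->
  let x' := x + Num.min 1 (- 'd f (A *m x) (col j A - A *m x) / (4 * Lf)) *: (e_ j - x) in
  [/\ simplex n x', (#|supp x'| <= #|supp x|.+1)%N &
      f (A *m x') - fstar f A <= (1 - rho) * (f (A *m x) - fstar f A)].
Proof.
move=> sx jmin lmax fw_cond x'.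
have Aw : A *m (e_ j - x) = col j A - A *m x by rewrite mulmxBr mulmx_e.
have gap_le : pairwise_gap x j l <= - (2 * 'd f (A *m x) (A *m (e_ j - x))).
  rewrite Aw /pairwise_gap !linearB /=; case/orP: fw_cond => [|/eqP card1]; first lra.
  have Ax : A *m x = col l A by rewrite (simplex_supp1 sx lmax.1 card1) mulmx_e.
  by have := jmin l; rewrite Ax; lra.
have q_ge0 : 0 <= - 'd f (A *m x) (A *m (e_ j - x)) / (4 * Lf).
  by rewrite divr_ge0 ?mulr_ge0 ?Lf_ge0 //; move: gap_le (pairwise_gap_ge0 l jmin); lra.
have sx' : simplex n x'.
  by apply: simplex_fw_update => //; rewrite ge_min lexx le_min ler01 -Aw q_ge0.
split => //.
  apply: leq_trans (subset_leq_card (supp_fw_update x j _ sx)) _.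
  by rewrite cardsU1; case: (j \notin supp x).
have h_le : f (A *m x) - fstar f A <= - 'd f (A *m x) (A *m (e_ j - x)).
  by rewrite Aw linearB opprB; exact: subopt_le_fw_gap.
have w_le2 : norm1 (e_ j - x) <= 2 by exact: norm1_simplexB (simplex_e j) sx.
rewrite /x' -Aw in sx' *.
by apply: (update_long_contraction (l := l) (amax := 1)).
Qed.

Lemma away_step_progress {x j l} :
  simplex n x -> fw_vertex x j -> away_vertex x l ->
  'd f (A *m x) (A *m x - col l A) <= 'd f (A *m x) (col j A - A *m x) ->
  #|supp x| != 1%N ->
  let x' := x + Num.min (x l 0 / (1 - x l 0))
                 (- 'd f (A *m x) (A *m x - col l A) / (4 * Lf)) *: (x - e_ l) in
  [/\ simplex n x', f (A *m x') - fstar f A <= f (A *m x) - fstar f A &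
      (#|supp x'| <= #|supp x|)%N /\
        f (A *m x') - fstar f A <= (1 - rho) * (f (A *m x) - fstar f A)
      \/ (#|supp x'| < #|supp x|)%N].
Proof.
move=> sx jmin lmax away_cond card_neq1 x'.
have xl0 : 0 < x l 0 by have := lmax.1; rewrite inE.
have xl1 := simplex_supp_lt1 sx lmax.1 card_neq1.
have amax_ge0 : 0 <= x l 0 / (1 - x l 0) by rewrite divr_ge0 ?subr_ge0 ?ltW.
have Aw : A *m (x - e_ l) = A *m x - col l A by rewrite mulmxBr mulmx_e.
have gap_le : pairwise_gap x j l <= - (2 * 'd f (A *m x) (A *m (x - e_ l))).
  by move: away_cond; rewrite Aw /pairwise_gap !linearB /=; lra.
have q_ge0 : 0 <= - 'd f (A *m x) (A *m (x - e_ l)) / (4 * Lf).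
  by rewrite divr_ge0 ?mulr_ge0 ?Lf_ge0 //; move: gap_le (pairwise_gap_ge0 l jmin); lra.
have w_le2 : norm1 (x - e_ l) <= 2 by exact: norm1_simplexB sx (simplex_e l).
have sx' : simplex n x'.
  by apply: simplex_away_update => //; rewrite le_min ge_min lexx amax_ge0 -Aw q_ge0.
rewrite /x' -Aw in sx' *.
have a_ge0 : 0 <= Num.min (x l 0 / (1 - x l 0)) (- 'd f (A *m x) (A *m (x - e_ l)) / (4 * Lf)).
  by rewrite le_min amax_ge0 q_ge0.
split => //.
  by apply: (update_descent (l := l) (amax := x l 0 / (1 - x l 0))).
have [q_le|] := boolP (- 'd f (A *m x) (A *m (x - e_ l)) / (4 * Lf) <= x l 0 / (1 - x l 0)).
  left; split; first exact: subset_leq_card (supp_away_update _ l _ sx a_ge0).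
  by apply: (update_short_contraction (l := l) (amax := x l 0 / (1 - x l 0))).
rewrite -ltNge => /ltW q_gt; right; rewrite (min_l q_gt).
exact: supp_away_drop sx lmax.1 xl1.
Qed.

Lemma afw_step_progress {x x'} : simplex n x -> afw_step f A Lf x x' ->
  [/\ simplex n x', f (A *m x') - fstar f A <= f (A *m x) - fstar f A &
      (#|supp x'| <= #|supp x|.+1)%N /\
        f (A *m x') - fstar f A <= (1 - rho) * (f (A *m x) - fstar f A)
      \/ (#|supp x'| < #|supp x|)%N].
Proof.
move=> sx [j [l [jmin [l_supp [l_max]]]]]; have lmax := conj l_supp l_max.
case: ifPn => [fw_cond /= ->|]; last first.
  rewrite negb_or -leNgt => /andP[away_cond card_neq1] /= ->.
  have [sx' desc [[supp_le contr]|supp_lt]] :=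
    away_step_progress sx jmin lmax away_cond card_neq1.
    by split=> //; left; split=> //; apply: leq_trans supp_le _.
  by split=> //; right.
have [sx' supp_le contr] := fw_step_progress sx jmin lmax fw_cond.
have h0 : 0 <= f (A *m x) - fstar f A by rewrite subr_ge0 fstar_le.
split=> //; last by left.
by apply: le_trans contr _; rewrite ler_piMl // lerBlDr lerDl rho_ge0.
Qed.

Lemma afw_contraction_count {x : nat -> 'cV[R]_n} :
  (exists i, x 0%N = e_ i) -> (forall k, afw_step f A Lf (x k) (x k.+1)) ->
  forall k, simplex n (x k) /\ exists c : nat, (#|supp (x k)| + k <= 1 + 2 * c)%N /\
    f (A *m x k) - fstar f A <= (1 - rho) ^+ c * (f (A *m x 0%N) - fstar f A).
Proof.
move=> [i x0_e] step; elim=> [|k [sxk [c [supp_le h_le]]]].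
  rewrite x0_e; split; first exact: simplex_e.
  by exists 0%N; rewrite supp_e cards1 expr0 mul1r.
have [sxk' desc [[supp_le' contr]|supp_lt]] := afw_step_progress sxk (step k).
  split=> //; exists c.+1; split; first lia.
  rewrite exprS -mulrA; apply: le_trans contr _.
  by rewrite ler_wpM2l // subr_ge0 (le_trans rho_le_half) // invf_le1 ?ler1n.
by split=> //; exists c; split; [lia | exact: le_trans desc h_le].
Qed.

Lemma afw_linear_rate {x : nat -> 'cV[R]_n} :
  (exists i, x 0%N = e_ i) -> (forall k, afw_step f A Lf (x k) (x k.+1)) ->
  forall k, f (A *m x k) - fstar f A <=
    (1 - rho) `^ (k%:R / 2) * (f (A *m x 0%N) - fstar f A).
Proof.
move=> x0_e step k.
have [sxk [c [supp_le h_le]]] := afw_contraction_count x0_e step k.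
have [sx0 _] := afw_contraction_count x0_e step 0.
apply: le_trans h_le _; rewrite ler_wpM2r ?subr_ge0 ?fstar_le //.
apply: exprn_le_powR_half; last by have := simplex_supp_gt0 sxk; lia.
by apply/andP; split; have := rho_ge0; have := rho_le_half; lra.
Qed.

End AwayStepFrankWolfe.

Theorem proposition3 (R : realType) (m n : nat) (A : 'M[R]_(m, n))
    (f : 'cV[R]_m -> R) (x : nat -> 'cV[R]_n) :
  (exists i j : 'I_n, col i A != col j A) ->
  (forall u, convA A u -> differentiable f u) ->
  (forall u v (t : R), convA A u -> convA A v -> 0 <= t <= 1 ->
     f ((1 - t) *: u + t *: v) <= (1 - t) * f u + t * f v) ->
  (L_fA f A < +oo)%E ->
  (0 < mu_fA f A)%E ->
  (exists i : 'I_n, x 0%N = e_ i) ->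
  (forall k, afw_step f A (fine (L_fA f A)) (x k) (x k.+1)) ->
  forall k : nat,
    let rho : R := if mu_fA f A == +oo%E then 2^-1
                   else Num.min (fine (mu_fA f A) / (16 * fine (L_fA f A))) 2^-1 in
    f (A *m x k) - fstar f A <=
      (1 - rho) `^ (k%:R / 2) * (f (A *m x 0%N) - fstar f A).
Proof.
move=> A_cols_neq f_diff f_convex L_lt_pinfty mu_gt0 x0_e step k.
exact: (afw_linear_rate A_cols_neq f_diff f_convex L_lt_pinfty mu_gt0 x0_e step k).
Qed.
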